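(* Let $\mathcal{U}\subseteq\mathbb{R}^d$, $\mathcal{V}\subseteq\mathbb{R}^D$ be compact convex with $\|u\|\le B$ for all $u\in\mathcal{U}$. Let $f:\mathcal{U}\times\mathcal{V}\to\mathbb{R}$ be continuous, with $f(\cdot,v)$ convex and differentiable for every $v$, $\|\nabla_u f(u,v)\|\le L$ for all $(u,v)$, $f(u,\cdot)$ $l$-Lipschitz and $\nabla_u f(u,\cdot)$ $r$-Lipschitz for every $u$. Let $\phi$ attain its minimum $\phi^\ast=\phi(u^\ast)$ on $\mathcal{U}$. Consider sequences $u_1,u_2,\dots\in\mathcal{U}$ and finite sets $A_1,A_2,\dots\subseteq\mathcal{V}$, numbers $\epsilon_i\ge0$, $\rho_i\ge0$, $\xi_i\ge0$, with updates $u_{i+1}=u_i-\rho_i z_i$ where $z_i\in\mathrm{co}\{\nabla_u f(u_i,v): v\in R^{\epsilon_i}_{A_i}(u_i)\}$. Suppose there is $i_0\ge1$ such that for all $i\ge i_0$: $R(u_i)$ and $S(u_i)$ are finite, $\epsilon_i<\zeta_i$, and $\max[d_H(R(u_i),A_i),d_H(A_i,S(u_i))]\le\delta_i$ where $\delta_i<\tfrac12(\zeta_i-\epsilon_i)/l$ and $\delta_i\le\tfrac12\xi_i/(rB)$. If $\sum_i\rho_i=\infty$, $\sum_i\rho_i^2<\infty$ and $\sum_i\rho_i\xi_i<\infty$, then $\min[\phi(u_1),\dots,\phi(u_i)]\to\phi^\ast$ as $i\to\infty$.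
   Context: Definitions: $\phi(u)=\max_{v\in\mathcal{V}} f(u,v)$, $R(u)=\{v\in\mathcal{V}: f(u,v)=\phi(u)\}$, $S(u)=\{v_0\in\mathcal{V}:\exists r>0,\ \forall v\in\mathcal{V},\ \|v_0-v\|\le r\Rightarrow f(u,v_0)\ge f(u,v)\}$ (local maximum points of $f(u,\cdot)$). $\zeta_i=\phi(u_i)-\max_{v\in S(u_i)\setminus R(u_i)}f(u_i,v)$, with $\zeta_i=\infty$ if $S(u_i)=R(u_i)$. For finite $A$: $\phi_A(u)=\max_{v\in A}f(u,v)$, $R^\epsilon_A(u)=\{v\in A:\phi_A(u)-f(u,v)\le\epsilon\}$. $d_H(X,Y)=\max_{x\in X}\min_{y\in Y}\|x-y\|$. $\mathrm{co}$ denotes convex hull. *)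

From mathcomp Require Import ssreflect ssrfun ssrbool eqtype ssrnat fintype bigop.
From Stdlib Require Import Reals List Classical.
Open Scope R_scope.

Definition vec (d : nat) := 'I_d -> R.
Definition vzero {d} : vec d := fun _ => 0.
Definition vadd {d} (x y : vec d) : vec d := fun i => x i + y i.
Definition vsub {d} (x y : vec d) : vec d := fun i => x i - y i.
Definition vscale {d} (a : R) (x : vec d) : vec d := fun i => a * x i.
Definition dot {d} (x y : vec d) : R := \big[Rplus/0]_(i < d) (x i * y i).
Definition norm {d} (x : vec d) : R := sqrt (dot x x).

Definition open_set {d} (O : vec d -> Prop) : Prop :=
  forall x, O x -> exists e, 0 < e /\ forall y, norm (vsub y x) < e -> O y.
Definition compact_set {d} (K : vec d -> Prop) : Prop :=
  forall (I : Type) (O : I -> vec d -> Prop),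
    (forall i, open_set (O i)) -> (forall x, K x -> exists i, O i x) ->
    exists l : list I, forall x, K x -> exists i, In i l /\ O i x.
Definition convex_set {d} (K : vec d -> Prop) : Prop :=
  forall x y t, K x -> K y -> 0 <= t <= 1 ->
    K (vadd (vscale t x) (vscale (1 - t) y)).
Definition convex_fun_on {d} (K : vec d -> Prop) (g : vec d -> R) : Prop :=
  forall x y t, K x -> K y -> 0 <= t <= 1 ->
    g (vadd (vscale t x) (vscale (1 - t) y)) <= t * g x + (1 - t) * g y.

Definition cont_on2 {d D} (K1 : vec d -> Prop) (K2 : vec D -> Prop)
  (f : vec d -> vec D -> R) : Prop :=
  forall x v, K1 x -> K2 v -> forall e, 0 < e -> exists de, 0 < de /\
    forall x' v', K1 x' -> K2 v' -> norm (vsub x' x) < de -> norm (vsub v' v) < de ->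
      Rabs (f x' v' - f x v) < e.

Definition has_gradient_on {d} (K : vec d -> Prop) (g : vec d -> R) (gr : vec d -> vec d) : Prop :=
  forall x, K x -> forall e, 0 < e -> exists de, 0 < de /\
    forall y, K y -> norm (vsub y x) < de ->
      Rabs (g y - g x - dot (gr x) (vsub y x)) <= e * norm (vsub y x).

Definition lipschitz_on {D} (K : vec D -> Prop) (g : vec D -> R) (c : R) : Prop :=
  forall v w, K v -> K w -> Rabs (g v - g w) <= c * norm (vsub v w).
Definition lipschitz_vec_on {D d} (K : vec D -> Prop) (g : vec D -> vec d) (c : R) : Prop :=
  forall v w, K v -> K w -> norm (vsub (g v) (g w)) <= c * norm (vsub v w).

Definition is_max_on {T} (P : T -> Prop) (g : T -> R) (m : R) : Prop :=
  (exists v, P v /\ g v = m) /\ (forall v, P v -> g v <= m).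
Definition is_min_on {T} (P : T -> Prop) (g : T -> R) (m : R) : Prop :=
  (exists v, P v /\ g v = m) /\ (forall v, P v -> m <= g v).

Definition finite_set {T} (P : T -> Prop) : Prop :=
  exists l : list T, forall x, P x <-> In x l.

Definition Rmaxset {d D} (V : vec D -> Prop) (f : vec d -> vec D -> R) (phi : vec d -> R)
  (u : vec d) (v : vec D) : Prop := V v /\ f u v = phi u.
Definition Slocset {d D} (V : vec D -> Prop) (f : vec d -> vec D -> R)
  (u : vec d) (v0 : vec D) : Prop :=
  V v0 /\ exists r, 0 < r /\ forall v, V v -> norm (vsub v0 v) <= r -> f u v <= f u v0.

(* zeta(u) in R u {+oo}, encoded as option R (None = +oo) *)
Definition zeta_is {d D} (V : vec D -> Prop) (f : vec d -> vec D -> R) (phi : vec d -> R)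
  (u : vec d) (z : option R) : Prop :=
  let SR := fun v => Slocset V f u v /\ ~ Rmaxset V f phi u v in
  ((forall v, ~ SR v) /\ z = None) \/
  (exists m, is_max_on SR (f u) m /\ z = Some (phi u - m)).

Definition dH_is {D} (X Y : vec D -> Prop) (m : R) : Prop :=
  exists h : vec D -> R,
    (forall x, X x -> is_min_on Y (fun y => norm (vsub x y)) (h x)) /\
    is_max_on X h m.

Definition Reps {d D} (f : vec d -> vec D -> R) (A : list (vec D)) (u : vec d)
  (eps : R) (v : vec D) : Prop :=
  In v A /\ exists m, is_max_on (fun w => In w A) (f u) m /\ m - f u v <= eps.

Definition conv_hull {d} (P : vec d -> Prop) (z : vec d) : Prop :=
  exists l : list (R * vec d),
    (forall p, In p l -> 0 <= fst p /\ P (snd p)) /\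
    fold_right (fun p s => fst p + s) 0 l = 1 /\
    z = fold_right (fun p s => vadd (vscale (fst p) (snd p)) s) vzero l.

Fixpoint runmin (g : nat -> R) (n : nat) : R :=
  match n with
  | O => g O
  | S k => Rmin (runmin g k) (g (S k))
  end.

From mathcomp Require Import ssreflect ssrfun ssrbool eqtype ssrnat fintype bigop.
From Stdlib Require Import Reals List Classical Lra FunctionalExtensionality.
Open Scope R_scope.

(* For i >= i0 the direction z_i is a xi_i-subgradient of phi at u_i. Indeed every
   v in R^eps_A(u_i) lies within delta_i of a local maximiser s in S(u_i) whose value
   f(u_i, s) >= phi(u_i) - 2 l delta_i - eps_i exceeds phi(u_i) - zeta_i, so s is a
   global maximiser; the subgradient inequality of the convex f(., s) then transfers
   to grad f(u_i, v) up to the error 2 r delta_i B <= xi_i.  Hence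
     |u_{i+1} - u*|^2 <= |u_i - u*|^2 - 2 rho_i (phi(u_i) - phi* - xi_i) + rho_i^2 L^2,
   and if phi(u_i) stayed eps above phi*, summing would make the left-hand side
   eventually negative, since sum rho_i diverges while sum rho_i^2 and
   sum rho_i xi_i converge. *)

Lemma dot_linear_l {d} a b (x y w : vec d) :
  dot (fun i => a * x i + b * y i) w = a * dot x w + b * dot y w.
Proof.
rewrite /dot; apply: (big_rec3 (fun p q s => p = a * q + b * s)) => [|i p q s _ ->];
  ring.
Qed.

Lemma dot_sym {d} (x y : vec d) : dot x y = dot y x.
Proof. by apply: eq_bigr => i _; rewrite Rmult_comm. Qed.

Lemma dot_linear_r {d} a b (x y w : vec d) :
  dot w (fun i => a * x i + b * y i) = a * dot w x + b * dot w y.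
Proof. by rewrite dot_sym dot_linear_l (dot_sym x) (dot_sym y). Qed.

Lemma dot_self_ge0 {d} (x : vec d) : 0 <= dot x x.
Proof.
apply: (big_rec (fun p => 0 <= p)) => [|i p _ Hp]; first lra.
have := Rle_0_sqr (x i); rewrite /Rsqr; lra.
Qed.

Lemma dot_ext {d} (x x' y y' : vec d) :
  (forall i, x i = x' i) -> (forall i, y i = y' i) -> dot x y = dot x' y'.
Proof. by move=> Hx Hy; apply: eq_bigr => i _; rewrite Hx Hy. Qed.

Lemma dot0l {d} (w : vec d) : dot vzero w = 0.
Proof.
rewrite (@dot_ext _ _ (fun i => 0 * w i + 0 * w i) w w) ?dot_linear_l //; first ring.
by move=> i; rewrite /vzero; ring.
Qed.

Lemma dotDl {d} (x y w : vec d) : dot (vadd x y) w = dot x w + dot y w.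
Proof.
rewrite (@dot_ext _ _ (fun i => 1 * x i + 1 * y i) w w) ?dot_linear_l //; first ring.
by move=> i; rewrite /vadd; ring.
Qed.

Lemma dotZl {d} a (x w : vec d) : dot (vscale a x) w = a * dot x w.
Proof.
rewrite (@dot_ext _ _ (fun i => a * x i + 0 * x i) w w) ?dot_linear_l //; first ring.
by move=> i; rewrite /vscale; ring.
Qed.

Lemma dotBl {d} (x y w : vec d) : dot (vsub x y) w = dot x w - dot y w.
Proof.
rewrite (@dot_ext _ _ (fun i => 1 * x i + (-1) * y i) w w) ?dot_linear_l //; first ring.
by move=> i; rewrite /vsub; ring.
Qed.

Lemma dotBr {d} (x y w : vec d) : dot w (vsub x y) = dot w x - dot w y.
Proof. by rewrite dot_sym dotBl !(dot_sym w). Qed.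

Lemma quadratic_ge0_discriminant (a b c : R) :
  0 <= a -> (forall t, 0 <= t * t * a + 2 * t * b + c) -> b * b <= a * c.
Proof.
move=> Ha H; case: (Req_dec a 0) => [Ha0|Ha0].
- subst a; case: (Req_dec b 0) => [->|Hb]; first lra.
  have := H (- (c + 1) / (2 * b)).
  have -> : - (c + 1) / (2 * b) * (- (c + 1) / (2 * b)) * 0
            + 2 * (- (c + 1) / (2 * b)) * b + c = -1 by field.
  lra.
- have := H (- b / a).
  have -> : - b / a * (- b / a) * a + 2 * (- b / a) * b + c = (a * c - b * b) / a
    by field.
  move=> Hq; have := Rmult_le_pos a _ Ha Hq.
  have -> : a * ((a * c - b * b) / a) = a * c - b * b by field.
  lra.
Qed.

Lemma Rabs_le_between a b : Rabs a <= b -> - b <= a <= b.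
Proof. by move=> H; split_Rabs; lra. Qed.

Lemma norm_ge0 {d} (x : vec d) : 0 <= norm x.
Proof. exact: sqrt_pos. Qed.

Lemma Rabs_dot_le {d} (x y : vec d) : Rabs (dot x y) <= norm x * norm y.
Proof.
have Hquad t : 0 <= t * t * dot x x + 2 * t * dot x y + dot y y.
{ have := dot_self_ge0 (fun i => t * x i + 1 * y i).
  rewrite dot_linear_l !dot_linear_r (dot_sym y x); nra. }
have := quadratic_ge0_discriminant _ _ _ (dot_self_ge0 x) Hquad.
rewrite /norm -sqrt_mult_alt; last exact: dot_self_ge0.
by rewrite -sqrt_Rsqr_abs => H; apply: sqrt_le_1_alt.
Qed.

Lemma dot_self_le_sq {d} (x : vec d) c : norm x <= c -> dot x x <= c * c.
Proof.
move=> H; have H0 := norm_ge0 x.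
rewrite -(sqrt_sqrt (dot x x)); last exact: dot_self_ge0.
rewrite /norm in H H0; nra.
Qed.

Lemma normZ {d} t (x : vec d) : 0 <= t -> norm (vscale t x) = t * norm x.
Proof.
move=> Ht; rewrite /norm dotZl dot_sym dotZl -Rmult_assoc sqrt_mult_alt; last nra.
by rewrite sqrt_square.
Qed.

Lemma dot_le_of_dot_self_le {d} (x y : vec d) c :
  dot x x <= c -> dot y y <= c -> dot x y <= c.
Proof.
move=> Hx Hy; have := dot_self_ge0 (vsub x y).
rewrite dotBl !dotBr (dot_sym y x); lra.
Qed.

Lemma convex_gradient_ineq {d} {U : vec d -> Prop} {g : vec d -> R}
  {gr : vec d -> vec d} {x y} :
  convex_set U -> convex_fun_on U g -> has_gradient_on U g gr -> U x -> U y ->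
  g x + dot (gr x) (vsub y x) <= g y.
Proof.
move=> HU Hconv Hgrad Ux Uy; set h := vsub y x; set n := norm h.
have Hn : 0 <= n := norm_ge0 h.
apply: Rle_plus_epsilon => e He.
have [de [Hde Hd]] := Hgrad x Ux (e / (n + 1)) ltac:(apply: Rdiv_lt_0_compat; lra).
set t := Rmin 1 (de / (2 * (n + 1))).
have Ht0 : 0 < t by apply: Rmin_pos; [lra | apply: Rdiv_lt_0_compat; lra].
have Ht1 : t <= 1 := Rmin_l _ _.
have Htn : t * (n + 1) <= de / 2.
{ have -> : de / 2 = de / (2 * (n + 1)) * (n + 1) by field; lra.
  apply: Rmult_le_compat_r; [lra | exact: Rmin_r]. }
set p := vadd (vscale t y) (vscale (1 - t) x).
have Up : U p by apply: HU => //; lra.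
have Hgp : g p <= t * g y + (1 - t) * g x by apply: Hconv => //; lra.
have Epx : vsub p x = vscale t h.
{ by apply: functional_extensionality => i; rewrite /vsub /p /vadd /vscale /h /vsub; ring. }
have Hnp : norm (vsub p x) = t * n by rewrite Epx normZ; [|lra].
have Hclose : norm (vsub p x) < de by rewrite Hnp; lra.
have := Hd p Up Hclose.
rewrite Hnp Epx (dot_sym (gr x)) dotZl (dot_sym h) => /Rabs_le_between [Hlow _].
have Herr : e / (n + 1) * (t * n) <= t * e.
{ have -> : t * e = e / (n + 1) * (t * (n + 1)) by field; lra.
  apply: Rmult_le_compat_l; [apply: Rlt_le; apply: Rdiv_lt_0_compat|]; nra. }
apply: (Rmult_le_reg_l t) => //; nra.
Qed.

Definition weight_sum {d} (l : list (R * vec d)) : R :=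
  fold_right (fun p s => fst p + s) 0 l.
Definition combination {d} (l : list (R * vec d)) : vec d :=
  fold_right (fun p s => vadd (vscale (fst p) (snd p)) s) vzero l.

Lemma combination_dot_ge {d} (l : list (R * vec d)) (h : vec d) c :
  (forall p, In p l -> 0 <= fst p /\ c <= dot (snd p) h) ->
  c * weight_sum l <= dot (combination l) h.
Proof.
elim: l => [|p l IH] H /=; first by rewrite dot0l; lra.
rewrite dotDl dotZl; have [Hp1 Hp2] := H p (or_introl erefl).
have := IH (fun q Hq => H q (or_intror Hq)); nra.
Qed.

Lemma combination_dot_le {d} (l : list (R * vec d)) (h : vec d) c :
  (forall p, In p l -> 0 <= fst p /\ dot (snd p) h <= c) ->
  dot (combination l) h <= c * weight_sum l.
Proof.
elim: l => [|p l IH] H /=; first by rewrite dot0l; lra.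
rewrite dotDl dotZl; have [Hp1 Hp2] := H p (or_introl erefl).
have := IH (fun q Hq => H q (or_intror Hq)); nra.
Qed.

Lemma conv_hull_dot_ge {d} (P : vec d -> Prop) (h z : vec d) c :
  (forall w, P w -> c <= dot w h) -> conv_hull P z -> c <= dot z h.
Proof.
move=> HP [l [Hl [Hw ->]]].
have := @combination_dot_ge _ l h c; rewrite /weight_sum Hw Rmult_1_r; apply.
by move=> p /Hl [Hp1 /HP].
Qed.

Lemma conv_hull_dot_self_le {d} (P : vec d -> Prop) (z : vec d) c :
  (forall w, P w -> dot w w <= c) -> conv_hull P z -> dot z z <= c.
Proof.
move=> HP [l [Hl [Hw ->]]]; rewrite -/(combination l).
suff : dot (combination l) (combination l) <= c * weight_sum l * weight_sum l
  by rewrite /weight_sum Hw; lra.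
apply: combination_dot_le => p /[dup] /Hl [Hp1 Pp] Hp; split => //.
rewrite dot_sym; apply: combination_dot_le => q /Hl [Hq1 Pq]; split => //.
exact: dot_le_of_dot_self_le (HP _ Pq) (HP _ Pp).
Qed.

Lemma sqdist_subgradient_step {d} {P : vec d -> Prop} {x y z : vec d} {rho c L : R} :
  0 <= rho -> conv_hull P z ->
  (forall w, P w -> c <= dot w (vsub x y) /\ norm w <= L) ->
  dot (vsub (vsub x (vscale rho z)) y) (vsub (vsub x (vscale rho z)) y)
    <= dot (vsub x y) (vsub x y) - 2 * rho * c + rho ^ 2 * L ^ 2.
Proof.
move=> Hrho Hz HP.
have Hzh : c <= dot z (vsub x y) by apply: conv_hull_dot_ge Hz => w /HP [].
have Hzz : dot z z <= L * L.
{ apply: conv_hull_dot_self_le Hz => w /HP [_]; exact: dot_self_le_sq. }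
have -> : vsub (vsub x (vscale rho z)) y = vsub (vsub x y) (vscale rho z).
{ by apply: functional_extensionality => i; rewrite /vsub /vscale; ring. }
move: (vsub x y) Hzh => h Hzh.
rewrite dotBl !dotBr !dotZl (dot_sym h (vscale _ _)) (dot_sym z (vscale _ _)) !dotZl.
have : rho * c <= rho * dot z h by apply: Rmult_le_compat_l.
have : rho * rho * dot z z <= rho * rho * (L * L) by apply: Rmult_le_compat_l; nra.
nra.
Qed.

Lemma dH_is_near {D} {X Y : vec D -> Prop} {m x} :
  dH_is X Y m -> X x -> exists y, Y y /\ norm (vsub x y) <= m.
Proof.
move=> [h [Hmin [_ Hmax]]] Xx; have [[y [Yy /= Ey]] _] := Hmin x Xx.
by exists y; split => //; rewrite Ey; apply: Hmax.
Qed.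

Lemma Rmaxset_of_Slocset {d D} {V : vec D -> Prop} {f phi} {x : vec d} {zt s} :
  zeta_is V f phi x zt -> Slocset V f x s ->
  (match zt with None => True | Some zv => phi x - zv < f x s end) ->
  Rmaxset V f phi x s.
Proof.
move=> Hzeta Ss Hgap; apply: NNPP => notR.
case: Hzeta => [[Hnone _] | [m [[_ Hm] Ezt]]]; first exact: Hnone s (conj Ss notR).
by subst zt; have := Hm s (conj Ss notR); simpl in Hgap; lra.
Qed.

Lemma Rabs_dot_sub_le {d} {w x y : vec d} {c B} :
  norm w <= c -> norm x <= B -> norm y <= B -> Rabs (dot w (vsub x y)) <= 2 * (c * B).
Proof.
move=> Hw Hx Hy; rewrite dotBr.
have Hwx : norm w * norm x <= c * B by apply: Rmult_le_compat => //; apply: norm_ge0.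
have Hwy : norm w * norm y <= c * B by apply: Rmult_le_compat => //; apply: norm_ge0.
have := Rabs_dot_le w x; have := Rabs_dot_le w y; split_Rabs; lra.
Qed.

Section ApproximateSubgradient.

Context {d D : nat} {U : vec d -> Prop} {V : vec D -> Prop}.
Context {f : vec d -> vec D -> R} {gradf : vec d -> vec D -> vec d} {phi : vec d -> R}.
Hypothesis convU : convex_set U.
Hypothesis f_convex : forall v, V v -> convex_fun_on U (fun x => f x v).
Hypothesis f_gradient :
  forall v, V v -> has_gradient_on U (fun x => f x v) (fun x => gradf x v).
Hypothesis phi_max : forall x, U x -> is_max_on V (f x) (phi x).

Lemma Rmaxset_gradient_ge {x y s} :
  U x -> U y -> Rmaxset V f phi x s -> phi x - phi y <= dot (gradf x s) (vsub x y).
Proof.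
move=> Ux Uy [Vs Es].
have := convex_gradient_ineq convU (f_convex s Vs) (f_gradient s Vs) Ux Uy.
have := (phi_max y Uy).2 s Vs; rewrite /= !dotBr; lra.
Qed.

Lemma Reps_near_Rmaxset {x A eps l delta zt m1 m2 v} :
  U x -> 0 < l -> lipschitz_on V (f x) l -> (forall w, In w A -> V w) ->
  zeta_is V f phi x zt ->
  dH_is (Rmaxset V f phi x) (fun w => In w A) m1 ->
  dH_is (fun w => In w A) (Slocset V f x) m2 -> Rmax m1 m2 <= delta ->
  (match zt with None => True | Some zv => delta < / 2 * (zv - eps) / l end) ->
  Reps f A x eps v ->
  exists s, Rmaxset V f phi x s /\ norm (vsub v s) <= delta.
Proof.
move=> Ux Hl Hlip HAV Hzeta H1 H2 Hm Hdelta [Av [m [[_ HmA] Hv]]].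
have Hm1 := Rle_trans _ _ _ (Rmax_l m1 m2) Hm.
have Hm2 := Rle_trans _ _ _ (Rmax_r m1 m2) Hm.
have [[w0 [Vw0 Ew0]] _] := phi_max x Ux.
have [a [Aa Ha]] := dH_is_near H1 (conj Vw0 Ew0).
have [s [Ss Hs]] := dH_is_near H2 Av.
exists s; split; last lra.
have Vs : V s by case: Ss.
have /Rabs_le_between Hfa := Hlip _ _ Vw0 (HAV _ Aa).
have /Rabs_le_between Hfs := Hlip _ _ (HAV _ Av) Vs.
have := HmA a Aa.
have : l * norm (vsub w0 a) <= l * delta by apply: Rmult_le_compat_l; lra.
have : l * norm (vsub v s) <= l * delta by apply: Rmult_le_compat_l; lra.
(* f x s >= phi x - 2 l delta - eps > phi x - zeta: too high for a merely local max *)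
move=> Hls Hla Hva; apply: Rmaxset_of_Slocset Hzeta Ss _.
case: zt Hdelta => [zv Hd|] //=.
have : l * delta < l * (/ 2 * (zv - eps) / l) by apply: Rmult_lt_compat_l.
have -> : l * (/ 2 * (zv - eps) / l) = (zv - eps) / 2 by field; lra.
lra.
Qed.

Lemma Reps_gradient_ge {x y A eps xi l r B delta zt m1 m2 v} :
  U x -> U y -> norm x <= B -> norm y <= B -> 0 < B -> 0 < l -> 0 < r ->
  lipschitz_on V (f x) l -> lipschitz_vec_on V (gradf x) r ->
  (forall w, In w A -> V w) -> zeta_is V f phi x zt ->
  dH_is (Rmaxset V f phi x) (fun w => In w A) m1 ->
  dH_is (fun w => In w A) (Slocset V f x) m2 -> Rmax m1 m2 <= delta ->
  (match zt with None => True | Some zv => delta < / 2 * (zv - eps) / l end) ->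
  delta <= / 2 * xi / (r * B) -> Reps f A x eps v ->
  phi x - phi y - xi <= dot (gradf x v) (vsub x y).
Proof.
move=> Ux Uy Bx By HB Hl Hr Hlip Hlipg HAV Hzeta H1 H2 Hm Hdelta Hxi Hv.
have [s [Rs Hvs]] := Reps_near_Rmaxset Ux Hl Hlip HAV Hzeta H1 H2 Hm Hdelta Hv.
have Hs := Rmaxset_gradient_ge Ux Uy Rs.
have Hg : norm (vsub (gradf x v) (gradf x s)) <= r * delta.
{ apply: Rle_trans (Hlipg _ _ (HAV _ Hv.1) Rs.1) _.
  by apply: Rmult_le_compat_l; lra. }
have /Rabs_le_between := Rabs_dot_sub_le Hg Bx By.
have : 2 * (r * delta * B) <= xi.
{ have : r * B * delta <= r * B * (/ 2 * xi / (r * B))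
    by apply: Rmult_le_compat_l => //; nra.
  have -> : r * B * (/ 2 * xi / (r * B)) = xi / 2 by field; nra.
  lra. }
rewrite dotBl; lra.
Qed.

End ApproximateSubgradient.

Lemma runmin_ge (g : nat -> R) c : (forall i, c <= g i) -> forall n, c <= runmin g n.
Proof. by move=> H; elim=> [|n IH] /=; [apply: H | apply: Rmin_glb]. Qed.

Lemma runmin_le (g : nat -> R) k n : (k <= n)%nat -> runmin g n <= g k.
Proof.
elim: n => [|n IH]; first by rewrite leqn0 => /eqP ->; apply: Rle_refl.
rewrite leq_eqVlt => /orP [/eqP -> | Hk] /=; first exact: Rmin_r.
exact: Rle_trans (Rmin_l _ _) (IH Hk).
Qed.

Lemma runmin_cv (g : nat -> R) c :
  (forall n, c <= g n) -> (forall e, 0 < e -> exists k, g k < c + e) ->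
  Un_cv (runmin g) c.
Proof.
move=> Hge Hnear e He; have [k Hk] := Hnear e He.
exists k => n /leP Hn; have := @runmin_le g k n Hn; have := runmin_ge _ _ Hge n.
by rewrite /Rdist; split_Rabs; lra.
Qed.

Lemma partial_sum_le_lim {a : nat -> R} {s} :
  (forall i, 0 <= a i) -> Un_cv (fun n => sum_f_R0 a n) s ->
  forall n, sum_f_R0 a n <= s.
Proof. by move=> Ha; apply: growing_ineq => n /=; have := Ha n.+1; lra. Qed.

Lemma nonincreasing_from (W : nat -> R) i0 :
  (forall n, (i0 <= n)%nat -> W (S n) <= W n) -> forall n, (i0 <= n)%nat -> W n <= W i0.
Proof.
move=> HW n /subnK <-; elim: (n - i0)%nat => [|k IH] /=; first exact: Rle_refl.
exact: Rle_trans (HW _ (leq_addl _ _)) IH.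
Qed.

Lemma subgradient_descent_near_min {e g rho xi : nat -> R} {c K X Y : R} {i0 : nat} :
  (forall i, 0 <= e i) -> (forall i, 0 <= rho i /\ 0 <= xi i) -> 0 <= K ->
  (forall i, (i0 <= i)%nat ->
     e (S i) <= e i - 2 * rho i * (g i - c - xi i) + rho i ^ 2 * K) ->
  cv_infty (fun n => sum_f_R0 rho n) ->
  Un_cv (fun n => sum_f_R0 (fun i => rho i ^ 2) n) Y ->
  Un_cv (fun n => sum_f_R0 (fun i => rho i * xi i) n) X ->
  forall eps, 0 < eps -> exists k, g k < c + eps.
Proof.
move=> He Hnn HK Hstep Hinf HY HX eps Heps; apply: NNPP => Hfar.
have Hall k : c + eps <= g k by apply: Rnot_lt_le => Hk; apply: Hfar; exists k.
(* W is nonincreasing from i0 on, yet grows like 2 eps sum rho. *)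
set W := fun n => e (S n) + 2 * eps * sum_f_R0 rho n
  - 2 * sum_f_R0 (fun i => rho i * xi i) n - K * sum_f_R0 (fun i => rho i ^ 2) n.
have HW : forall n, (i0 <= n)%nat -> W n <= W i0.
{ apply: nonincreasing_from => n Hn; have [Hrho _] := Hnn (S n).
  have := Hstep (S n) (leqW Hn).
  have := Rmult_le_compat_l _ (eps - xi (S n)) (g (S n) - c - xi (S n)) Hrho
    ltac:(have := Hall (S n); lra).
  rewrite /W /=; lra. }
have HXn := partial_sum_le_lim (fun i => Rmult_le_pos _ _ (Hnn i).1 (Hnn i).2) HX.
have HYn := partial_sum_le_lim (fun i => pow2_ge_0 (rho i)) HY.
set M := (W i0 + 2 * X + K * Y) / (2 * eps).
have EM : 2 * eps * M = W i0 + 2 * X + K * Y by rewrite /M; field; lra.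
have [N HN] := Hinf M; set n := (i0 + N)%nat.
have : 2 * eps * M < 2 * eps * sum_f_R0 rho n.
{ by apply: Rmult_lt_compat_l; [lra | apply: HN; apply/leP; apply: leq_addl]. }
have := HW n (leq_addr _ _); have := He (S n); have := HXn n.
have : K * sum_f_R0 (fun i => rho i ^ 2) n <= K * Y by apply: Rmult_le_compat_l.
rewrite /W in EM *; lra.
Qed.

Theorem mainTheorem5 (d D : nat) (U : vec d -> Prop) (V : vec D -> Prop)
  (B L l r : R) (f : vec d -> vec D -> R) (gradf : vec d -> vec D -> vec d)
  (phi : vec d -> R) (ustar : vec d)
  (u : nat -> vec d) (A : nat -> list (vec D)) (eps rho xi : nat -> R)
  (z : nat -> vec d) (i0 : nat) :
  compact_set U -> convex_set U -> compact_set V -> convex_set V ->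
  (forall x, U x -> norm x <= B) ->
  0 < B -> 0 < l -> 0 < r ->
  cont_on2 U V f ->
  (forall v, V v -> convex_fun_on U (fun x => f x v)) ->
  (forall v, V v -> has_gradient_on U (fun x => f x v) (fun x => gradf x v)) ->
  (forall x v, U x -> V v -> norm (gradf x v) <= L) ->
  (forall x, U x -> lipschitz_on V (f x) l) ->
  (forall x, U x -> lipschitz_vec_on V (gradf x) r) ->
  (forall x, U x -> is_max_on V (f x) (phi x)) ->
  U ustar -> (forall x, U x -> phi ustar <= phi x) ->
  (forall i, U (u i)) ->
  (forall i v, In v (A i) -> V v) ->
  (forall i, 0 <= eps i /\ 0 <= rho i /\ 0 <= xi i) ->
  (forall i, conv_hull (fun w => exists v, Reps f (A i) (u i) (eps i) v /\ w = gradf (u i) v) (z i)) ->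
  (forall i, u (S i) = vsub (u i) (vscale (rho i) (z i))) ->
  (forall i, (i0 <= i)%nat ->
     finite_set (Rmaxset V f phi (u i)) /\ finite_set (Slocset V f (u i)) /\
     exists zt delta,
       zeta_is V f phi (u i) zt /\
       (match zt with None => True | Some zv => eps i < zv end) /\
       (exists m1 m2, dH_is (Rmaxset V f phi (u i)) (fun v => In v (A i)) m1 /\
                      dH_is (fun v => In v (A i)) (Slocset V f (u i)) m2 /\
                      Rmax m1 m2 <= delta) /\
       (match zt with None => True | Some zv => delta < / 2 * (zv - eps i) / l end) /\
       delta <= / 2 * xi i / (r * B)) ->
  cv_infty (fun n => sum_f_R0 rho n) ->
  (exists s, Un_cv (fun n => sum_f_R0 (fun i => rho i ^ 2) n) s) ->
  (exists s, Un_cv (fun n => sum_f_R0 (fun i => rho i * xi i) n) s) ->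
  Un_cv (runmin (fun i => phi (u i))) (phi ustar).
Proof.
move=> _ convU _ _ normB HB Hl Hr _ f_convex f_gradient gradL f_lip grad_lip phi_max
  Ustar phi_min Uu AV Hnn Hz Hupd Hi0 Hinf [Y HY] [X HX].
apply: runmin_cv => [n|]; first exact: phi_min.
apply: (subgradient_descent_near_min
  (e := fun i => dot (vsub (u i) ustar) (vsub (u i) ustar)) (K := L ^ 2)
  (fun i => dot_self_ge0 _) (fun i => conj (Hnn i).2.1 (Hnn i).2.2) (pow2_ge_0 L)
  _ Hinf HY HX) => i Hi.
have [_ [_ [zt [delta [Hzeta [_ [[m1 [m2 [H1 [H2 Hm]]]] [Hdelta Hxi]]]]]]]] := Hi0 i Hi.
rewrite Hupd; apply: (sqdist_subgradient_step (Hnn i).2.1 (Hz i)) => _ [v [Hv ->]].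
split; last by apply: gradL; [exact: Uu | exact: AV Hv.1].
exact: (Reps_gradient_ge convU f_convex f_gradient phi_max (Uu i) Ustar
  (normB _ (Uu i)) (normB _ Ustar) HB Hl Hr (f_lip _ (Uu i)) (grad_lip _ (Uu i)) (AV i)
  Hzeta H1 H2 Hm Hdelta Hxi Hv).
Qed.
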